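(* Let $r,q,a\in\mathbb{R}$, $\sigma>0$, $b>0$, $0\le R<1$, $T>0$, and set $V_b(t)=be^{-a(T-t)}$. The solution $B(V,t)$ of the problem \[ \frac{\partial B}{\partial t}+\frac12\sigma^2V^2\frac{\partial^2B}{\partial V^2}+(r-q)V\frac{\partial B}{\partial V}-rB=0,\quad V_b(t)<V<+\infty,\ 0<t<T, \] \[ B(V_b(t),t)=e^{-r(T-t)}R,\ 0<t<T,\qquad B(V,T)=1,\ V>b, \] is given by \[ B(V,t)=R\,e^{-r(T-t)}+W(V,t)(1-R)e^{-r(T-t)}, \] where \[ W(V,t)=N(d_1)-\left(\frac{V}{be^{-a(T-t)}}\right)^{1-\frac{2(r-q-a)}{\sigma^2}}N(d_2), \] \[ d_1=\frac{\ln\frac{V}{b}+(r-q-\frac{\sigma^2}{2})(T-t)}{\sigma\sqrt{T-t}},\qquad d_2=\frac{\ln\frac{b}{V}+(r-q-2a-\frac{\sigma^2}{2})(T-t)}{\sigma\sqrt{T-t}}. \] Furthermore, for $V>V_b(t)$ (and $0\le t<T$), \[ B_V(V,t)>0,\qquad R\,e^{-r(T-t)}<B(V,t)<e^{-r(T-t)}. \]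
   Context: $N(x)=\frac{1}{\sqrt{2\pi}}\int_{-\infty}^{x}e^{-s^2/2}\,ds$ is the standard normal distribution function. (Financial interpretation: $V$ is the firm value, $B$ the price of a zero-coupon corporate bond with face value $1$ and maturity $T$, default occurs when $V\le V_b(t)$, and $Re^{-r(T-t)}$ is the default recovery; $W$ is the survival probability.) *)

From Stdlib Require Import Reals.
From Coquelicot Require Import Coquelicot.
Open Scope R_scope.

Definition Nphi (x : R) : R :=
  / sqrt (2 * PI) *
  RInt_gen (fun s => exp (- s ^ 2 / 2)) (Rbar_locally m_infty) (at_point x).

Definition Vb (a b T t : R) : R := b * exp (- a * (T - t)).

Definition d1 (r q sigma b T V t : R) : R :=
  (ln (V / b) + (r - q - sigma ^ 2 / 2) * (T - t)) / (sigma * sqrt (T - t)).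

Definition d2 (r q a sigma b T V t : R) : R :=
  (ln (b / V) + (r - q - 2 * a - sigma ^ 2 / 2) * (T - t)) / (sigma * sqrt (T - t)).

Definition Wsurv (r q a sigma b T V t : R) : R :=
  Nphi (d1 r q sigma b T V t)
  - Rpower (V / (b * exp (- a * (T - t)))) (1 - 2 * (r - q - a) / sigma ^ 2)
    * Nphi (d2 r q a sigma b T V t).

Definition Bond (r q a sigma b Rec T V t : R) : R :=
  Rec * exp (- r * (T - t)) + Wsurv r q a sigma b T V t * (1 - Rec) * exp (- r * (T - t)).

(* With u = sqrt (T - t), B is an explicit expression in V, u, N and the normal density
   npdf, and npdf (d1) = (V / V_b)^k npdf (d2) with k = 1 - 2 (r - q - a) / sigma^2; with
   this identity and d1 + d2 = - k sigma u, the PDE and the barrier condition become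
   algebraic identities.  As t -> T, d1 -> +oo and d2 -> -oo, which gives the terminal
   value.  B_V has the sign of npdf (z) + m N (z) with z = d2 < m; for m < 0 this is
   positive by the Mills-ratio bound - z N (z) < npdf (z), which holds because
   npdf z / (- z) - N z increases on (-oo, 0) from the limit 0.  So B increases from its
   barrier value R e^{-r(T-t)}, and W < 1 gives the upper bound.  The closed form of N
   rests on the Gaussian integral, obtained from the classical fact that
   (int_0^x e^{-s^2} ds)^2 + int_0^1 e^{-x^2 (1+s^2)} / (1+s^2) ds is constant. *)

From Pilot Require Import Defs.
From Stdlib Require Import Reals Lra.
From Coquelicot Require Import Coquelicot.
Open Scope R_scope.

Lemma is_derive_pos_lt (f f' : R -> R) (a b : R) :
  a < b -> (forall x, a <= x <= b -> is_derive f x (f' x)) ->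
  (forall x, a < x < b -> 0 < f' x) -> f a < f b.
Proof.
  intros Hab Hd Hpos.
  destruct (MVT_cor2 f f' a b Hab) as [c [Hc Hcab]].
  - intros c Hc. apply is_derive_Reals, Hd, Hc.
  - pose proof (Hpos c Hcab). nra.
Qed.

Lemma is_derive_0_const (f : R -> R) (x y : R) :
  (forall z, is_derive f z 0) -> f x = f y.
Proof.
  intros Hd.
  destruct (MVT_gen f y x (fun _ => 0)) as [c [_ Hc]].
  - intros z _. apply Hd.
  - intros z _. apply derivable_continuous_pt. exists 0. apply is_derive_Reals, Hd.
  - lra.
Qed.

Lemma lim_m_infty_lt_increasing (f g : R -> R) (l z : R) :
  (forall x y, x < y <= z -> f x < f y) -> (forall x, x <= z -> g x <= f x) ->
  is_lim g m_infty l -> l < f z.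
Proof.
  intros Hf Hgf Hl.
  apply Rle_lt_trans with (f (z - 1)); [| apply Hf; lra].
  apply (is_lim_le_loc g (fun _ => f (z - 1)) m_infty l (f (z - 1)));
    [| exact Hl | apply is_lim_const].
  exists (z - 1). intros x Hx. left. apply Rle_lt_trans with (f x); [apply Hgf; lra |].
  apply Hf. lra.
Qed.

Lemma is_lim_scal_pos_infty (c : R) (x : Rbar) :
  0 < c -> x = p_infty \/ x = m_infty -> is_lim (fun y => c * y) x x.
Proof.
  intros Hc Hx. replace x with (Rbar_mult c x) at 2.
  - apply is_lim_scal_l, is_lim_id.
  - destruct Hx as [-> | ->]; apply is_Rbar_mult_unique, is_Rbar_mult_sym;
      [apply is_Rbar_mult_p_infty_pos | apply is_Rbar_mult_m_infty_pos]; exact Hc.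
Qed.

Lemma is_derive_eq (f : R -> R) (x l l' : R) : is_derive f x l -> l = l' -> is_derive f x l'.
Proof. now intros Hd <-. Qed.

Create HintDb derive.

Ltac pos_side :=
  match goal with
  | |- _ <> 0 => apply Rgt_not_eq; unfold Rgt; pos_side
  | |- 0 < _ * _ => apply Rmult_lt_0_compat; pos_side
  | |- 0 < / _ => apply Rinv_0_lt_compat; pos_side
  | |- 0 < _ / _ => apply Rdiv_lt_0_compat; pos_side
  | |- 0 < exp _ => apply exp_pos
  | |- _ => first [assumption | lra]
  end.

Ltac field_pos := field; repeat split; pos_side.

(* [auto_derive] leaves [Derive f x] for the functions it does not know; these are
   rewritten with the derivative lemmas registered in the [derive] hint database. *)
Ltac rewrite_Derive := repeat (erewrite is_derive_unique by eauto with derive).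
Ltac derive_by_hints :=
  eapply is_derive_eq;
  [auto_derive; [repeat split; try (eexists; eauto with derive); pos_side | reflexivity] |
   rewrite_Derive].

Definition gauss (t : R) : R := exp (- (t * t)).
Definition gauss_int (x : R) : R := RInt gauss 0 x.
Definition gauss_aux_integrand (x t : R) : R := exp (- (x * x) * (1 + t * t)) / (1 + t * t).
Definition gauss_aux (x : R) : R := RInt (gauss_aux_integrand x) 0 1.

Lemma one_plus_sqr_pos (t : R) : 0 < 1 + t * t.
Proof. nra. Qed.

Lemma continuous_gauss (x : R) : continuous gauss x.
Proof. apply (ex_derive_continuous (V := R_NormedModule)). unfold gauss. auto_derive. easy. Qed.

Lemma ex_RInt_gauss (a b : R) : ex_RInt gauss a b.
Proof.
  apply (ex_RInt_continuous (V := R_CompleteNormedModule)). intros; apply continuous_gauss.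
Qed.

Lemma is_derive_gauss_int (x : R) : is_derive gauss_int x (gauss x).
Proof.
  apply is_derive_RInt with (a := 0); [| apply continuous_gauss].
  apply filter_forall. intros y. apply (RInt_correct (V := R_CompleteNormedModule)), ex_RInt_gauss.
Qed.

Lemma continuous_gauss_aux_integrand (x t : R) : continuous (gauss_aux_integrand x) t.
Proof.
  apply (ex_derive_continuous (V := R_NormedModule)). unfold gauss_aux_integrand.
  auto_derive. pose proof (one_plus_sqr_pos t). lra.
Qed.

Lemma is_derive_gauss_aux_integrand (x t : R) :
  is_derive (fun y => gauss_aux_integrand y t) x (-2 * x * exp (- (x * x) * (1 + t * t))).
Proof.
  pose proof (one_plus_sqr_pos t). unfold gauss_aux_integrand.
  derive_by_hints. field. lra.
Qed.

Lemma continuity_2d_gauss_aux_partial (x t : R) :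
  continuity_2d_pt (fun y s => -2 * y * exp (- (y * y) * (1 + s * s))) x t.
Proof.
  repeat first
    [ apply continuity_2d_pt_mult | apply continuity_2d_pt_plus | apply continuity_2d_pt_opp
    | apply continuity_2d_pt_const | apply continuity_2d_pt_id1 | apply continuity_2d_pt_id2
    | apply continuity_1d_2d_pt_comp; [apply derivable_continuous_pt, derivable_pt_exp |] ].
Qed.

Lemma is_derive_gauss_aux (x : R) : is_derive gauss_aux x (-2 * gauss x * gauss_int x).
Proof.
  eapply is_derive_eq.
  - apply is_derive_RInt_param.
    + apply filter_forall. intros y t _. eexists. apply is_derive_gauss_aux_integrand.
    + intros t _. eapply continuity_2d_pt_ext; [| apply (continuity_2d_gauss_aux_partial x t)].
      intros y s. symmetry. apply is_derive_unique, is_derive_gauss_aux_integrand.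
    + apply filter_forall. intros y.
      apply (ex_RInt_continuous (V := R_CompleteNormedModule)).
      intros; apply continuous_gauss_aux_integrand.
  - assert (Hsub : is_RInt (fun t => scal x (gauss (x * t + 0))) 0 1 (gauss_int x)).
    { apply (is_RInt_comp_lin gauss x 0 0 1).
      replace (x * 0 + 0) with 0 by ring. replace (x * 1 + 0) with x by ring.
      apply (RInt_correct (V := R_CompleteNormedModule)), ex_RInt_gauss. }
    apply (is_RInt_scal _ _ _ (-2 * gauss x)) in Hsub.
    apply is_RInt_unique. eapply is_RInt_ext; [| exact Hsub].
    intros t _. rewrite is_derive_unique with (l := -2 * x * exp (- (x * x) * (1 + t * t)))
      by apply is_derive_gauss_aux_integrand.
    unfold gauss, scal; simpl; unfold mult; simpl.
    replace (- (x * x) * (1 + t * t)) with (- (x * x) + - ((x * t + 0) * (x * t + 0))) by ring.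
    rewrite exp_plus. ring.
Qed.

Lemma gauss_int_0 : gauss_int 0 = 0.
Proof. exact (RInt_point 0 gauss). Qed.

Lemma gauss_aux_0 : gauss_aux 0 = PI / 4.
Proof.
  replace (PI / 4) with (atan 1 - atan 0) by (rewrite atan_0, atan_1; ring).
  apply is_RInt_unique, (is_RInt_ext (fun t => / (1 + t²))).
  { intros t _. unfold gauss_aux_integrand, Rsqr.
    rewrite Rmult_0_l, Ropp_0, Rmult_0_l, exp_0. unfold Rdiv. now rewrite Rmult_1_l. }
  apply (is_RInt_derive (V := R_CompleteNormedModule)); [intros; apply is_derive_atan |].
  intros t _. apply (ex_derive_continuous (V := R_NormedModule)).
  auto_derive. unfold Rsqr. pose proof (one_plus_sqr_pos t). lra.
Qed.

#[export] Hint Resolve is_derive_gauss_int is_derive_gauss_aux : derive.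

Lemma gauss_int_sqr_plus_aux (x : R) : gauss_int x * gauss_int x + gauss_aux x = PI / 4.
Proof.
  transitivity (gauss_int 0 * gauss_int 0 + gauss_aux 0);
    [| rewrite gauss_int_0, gauss_aux_0; ring].
  apply (is_derive_0_const (fun z => gauss_int z * gauss_int z + gauss_aux z)). intros z.
  derive_by_hints. ring.
Qed.

Lemma gauss_aux_bounds (x : R) : 0 <= gauss_aux x <= gauss x.
Proof.
  assert (Hex : ex_RInt (gauss_aux_integrand x) 0 1).
  { apply (ex_RInt_continuous (V := R_CompleteNormedModule)).
    intros; apply continuous_gauss_aux_integrand. }
  unfold gauss_aux. split.
  - apply RInt_ge_0; [lra | exact Hex |]. intros t _.
    unfold gauss_aux_integrand. pose proof (one_plus_sqr_pos t).
    apply Rlt_le, Rdiv_lt_0_compat; [apply exp_pos | lra].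
  - replace (gauss x) with (RInt (fun _ => gauss x) 0 1)
      by (rewrite RInt_const; unfold scal; simpl; unfold mult; simpl; ring).
    apply RInt_le; [lra | exact Hex | apply ex_RInt_const |].
    intros t [Ht0 Ht1]. unfold gauss_aux_integrand, gauss. pose proof (one_plus_sqr_pos t).
    apply Rmult_le_reg_r with (1 + t * t); [lra |].
    unfold Rdiv. rewrite Rmult_assoc, Rinv_l, Rmult_1_r by lra.
    apply Rle_trans with (exp (- (x * x))); [| pose proof (exp_pos (- (x * x))); nra].
    destruct (Rle_lt_or_eq_dec 0 (x * x * (t * t))) as [Hpos | Hzero]; [nra | |].
    + left. apply exp_increasing. nra.
    + right. f_equal. nra.
Qed.

Lemma is_lim_gauss_p_infty : is_lim gauss p_infty 0.
Proof.
  apply (is_lim_comp exp (fun t => - (t * t)) p_infty 0 m_infty); [apply is_lim_exp_m | |].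
  - change m_infty with (Rbar_opp (Rbar_mult p_infty p_infty)).
    apply is_lim_opp, is_lim_mult; try apply is_lim_id. easy.
  - exists 0. easy.
Qed.

Lemma is_lim_gauss_int_p_infty : is_lim gauss_int p_infty (sqrt PI / 2).
Proof.
  apply (is_lim_ext_loc (fun x => sqrt (PI / 4 - gauss_aux x))).
  { exists 0. intros x Hx. rewrite <- (gauss_int_sqr_plus_aux x).
    replace (_ + _ - _) with (gauss_int x * gauss_int x) by ring.
    apply sqrt_square. apply RInt_ge_0; [lra | apply ex_RInt_gauss |].
    intros t _. apply Rlt_le, exp_pos. }
  replace (sqrt PI / 2) with (sqrt (PI / 4 - 0)).
  2:{ pose proof PI_RGT_0. replace (PI / 4 - 0) with (PI * / (2 * 2)) by field.
      rewrite sqrt_mult_alt, sqrt_inv, sqrt_square by lra. reflexivity. }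
  apply (is_lim_comp_continuous (fun x => PI / 4 - gauss_aux x) sqrt).
  - apply (is_lim_minus _ _ p_infty (PI / 4) 0); [apply is_lim_const | | easy].
    apply (is_lim_le_le_loc (fun _ => 0) gauss);
      [| apply is_lim_const | apply is_lim_gauss_p_infty].
    exists 0. intros; apply gauss_aux_bounds.
  - apply continuity_pt_filterlim, continuity_pt_sqrt. pose proof PI_RGT_0. lra.
Qed.

Lemma gauss_int_opp (x : R) : gauss_int (- x) = - gauss_int x.
Proof.
  enough (gauss_int (- x) + gauss_int x = gauss_int (- 0) + gauss_int 0)
    by (rewrite Ropp_0, gauss_int_0 in *; lra).
  apply (is_derive_0_const (fun z => gauss_int (- z) + gauss_int z)). intros z.
  derive_by_hints. replace (gauss (- z)) with (gauss z) by (unfold gauss; f_equal; ring). ring.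
Qed.

Lemma is_lim_gauss_int_m_infty : is_lim gauss_int m_infty (- (sqrt PI / 2)).
Proof.
  apply (is_lim_ext (fun x => - gauss_int (- x))); [intros x; rewrite gauss_int_opp; ring |].
  apply (is_lim_opp (fun x => gauss_int (- x)) m_infty (sqrt PI / 2)).
  apply (is_lim_comp gauss_int Ropp m_infty (sqrt PI / 2) p_infty);
    [apply is_lim_gauss_int_p_infty | | exists 0; easy].
  change p_infty with (Rbar_opp m_infty). apply is_lim_opp, is_lim_id.
Qed.

Lemma gauss_int_lt (x y : R) : x < y -> gauss_int x < gauss_int y.
Proof.
  intros Hxy. apply (is_derive_pos_lt gauss_int gauss); [exact Hxy | |].
  - intros; apply is_derive_gauss_int.
  - intros; apply exp_pos.
Qed.

Lemma gauss_int_bounds (x : R) : - (sqrt PI / 2) < gauss_int x < sqrt PI / 2.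
Proof.
  assert (Hlb : forall y, - (sqrt PI / 2) < gauss_int y).
  { intros y. apply (lim_m_infty_lt_increasing gauss_int gauss_int);
      [intros u v Huv; apply gauss_int_lt, Huv | intros; apply Rle_refl |
       apply is_lim_gauss_int_m_infty]. }
  split; [apply Hlb |]. specialize (Hlb (- x)). rewrite gauss_int_opp in Hlb. lra.
Qed.

Definition gauss_prim (y : R) : R := sqrt 2 * gauss_int (y / sqrt 2).

Lemma sqrt2_pos : 0 < sqrt 2.
Proof. apply sqrt_lt_R0. lra. Qed.

Lemma sqrt_2PI : sqrt (2 * PI) = sqrt 2 * sqrt PI.
Proof. apply sqrt_mult_alt. lra. Qed.

Lemma sqrt_2PI_pos : 0 < sqrt (2 * PI).
Proof. apply sqrt_lt_R0. pose proof PI_RGT_0. lra. Qed.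

Lemma is_derive_gauss_prim (y : R) : is_derive gauss_prim y (exp (- y ^ 2 / 2)).
Proof.
  pose proof sqrt2_pos. unfold gauss_prim. derive_by_hints.
  unfold gauss. replace (- (y * / sqrt 2 * (y * / sqrt 2))) with (- y ^ 2 / 2).
  - field. lra.
  - replace (y * / sqrt 2 * (y * / sqrt 2)) with (y * y / (sqrt 2 * sqrt 2)) by (field; lra).
    rewrite sqrt_sqrt by lra. field.
Qed.
#[export] Hint Resolve is_derive_gauss_prim : derive.

Lemma is_lim_gauss_prim (x : Rbar) (l : R) :
  x = p_infty \/ x = m_infty -> is_lim gauss_int x l -> is_lim gauss_prim x (sqrt 2 * l).
Proof.
  intros Hx Hl. apply (is_lim_scal_l (fun y => gauss_int (y / sqrt 2)) (sqrt 2) x l).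
  apply (is_lim_comp gauss_int (fun y => y / sqrt 2) x l x); [exact Hl | |].
  - apply (is_lim_ext (fun y => / sqrt 2 * y)); [intros y; apply Rmult_comm |].
    apply is_lim_scal_pos_infty; [apply Rinv_0_lt_compat, sqrt2_pos | exact Hx].
  - destruct Hx as [-> | ->]; exists 0; easy.
Qed.

Lemma Nphi_gauss_prim (x : R) : Nphi x = / 2 + gauss_prim x / sqrt (2 * PI).
Proof.
  pose proof sqrt2_pos. pose proof (sqrt_lt_R0 PI PI_RGT_0). unfold Nphi.
  rewrite (is_RInt_gen_unique _ (gauss_prim x - sqrt 2 * - (sqrt PI / 2)));
    [rewrite sqrt_2PI; field; lra |].
  apply (is_RInt_gen_ext (Derive gauss_prim)).
  { apply filter_forall. intros ab s _. apply is_derive_unique, is_derive_gauss_prim. }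
  apply (is_RInt_gen_Derive (Fa := Rbar_locally m_infty) (Fb := at_point x) gauss_prim).
  - apply filter_forall. intros ab s _. eexists; apply is_derive_gauss_prim.
  - apply filter_forall. intros ab s _.
    apply (continuous_ext (fun y => exp (- y ^ 2 / 2))).
    { intros y. symmetry. apply is_derive_unique, is_derive_gauss_prim. }
    apply (ex_derive_continuous (V := R_NormedModule)). auto_derive. easy.
  - apply (is_lim_gauss_prim m_infty); [now right | apply is_lim_gauss_int_m_infty].
  - intros P HP. exact (locally_singleton _ _ HP).
Qed.

Definition npdf (x : R) : R := exp (- x ^ 2 / 2) / sqrt (2 * PI).

Lemma npdf_pos (x : R) : 0 < npdf x.
Proof. apply Rdiv_lt_0_compat; [apply exp_pos | apply sqrt_2PI_pos]. Qed.

Lemma is_derive_Nphi (x : R) : is_derive Nphi x (npdf x).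
Proof.
  pose proof sqrt_2PI_pos.
  apply (is_derive_ext (fun y => / 2 + gauss_prim y / sqrt (2 * PI))).
  { intros y. symmetry. apply Nphi_gauss_prim. }
  derive_by_hints. unfold npdf. field. lra.
Qed.

Lemma is_derive_npdf (x : R) : is_derive npdf x (- x * npdf x).
Proof.
  pose proof sqrt_2PI_pos. unfold npdf. derive_by_hints.
  replace (- (x * (x * 1)) * / 2) with (- x ^ 2 / 2) by field. field. lra.
Qed.
#[export] Hint Resolve is_derive_Nphi is_derive_npdf : derive.

Lemma is_lim_Nphi_of_gauss_prim (x : Rbar) (l : R) :
  is_lim gauss_prim x l -> is_lim Nphi x (/ 2 + l / sqrt (2 * PI)).
Proof.
  intros Hl. apply (is_lim_ext (fun y => / 2 + gauss_prim y * / sqrt (2 * PI))).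
  { intros y. symmetry. apply Nphi_gauss_prim. }
  apply (is_lim_plus _ _ _ (/ 2) (l * / sqrt (2 * PI))); [apply is_lim_const | | easy].
  apply (is_lim_scal_r gauss_prim _ x l), Hl.
Qed.

Lemma is_lim_Nphi_p_infty : is_lim Nphi p_infty 1.
Proof.
  pose proof sqrt2_pos. pose proof (sqrt_lt_R0 PI PI_RGT_0).
  replace 1 with (/ 2 + sqrt 2 * (sqrt PI / 2) / sqrt (2 * PI)) by (rewrite sqrt_2PI; field; lra).
  apply is_lim_Nphi_of_gauss_prim, is_lim_gauss_prim; [now left | apply is_lim_gauss_int_p_infty].
Qed.

Lemma is_lim_Nphi_m_infty : is_lim Nphi m_infty 0.
Proof.
  pose proof sqrt2_pos. pose proof (sqrt_lt_R0 PI PI_RGT_0).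
  replace 0 with (/ 2 + sqrt 2 * - (sqrt PI / 2) / sqrt (2 * PI)) by (rewrite sqrt_2PI; field; lra).
  apply is_lim_Nphi_of_gauss_prim, is_lim_gauss_prim; [now right | apply is_lim_gauss_int_m_infty].
Qed.

Lemma Nphi_bounds (x : R) : 0 < Nphi x < 1.
Proof.
  rewrite Nphi_gauss_prim. unfold gauss_prim. rewrite sqrt_2PI.
  pose proof sqrt2_pos. pose proof (sqrt_lt_R0 PI PI_RGT_0).
  pose proof (gauss_int_bounds (x / sqrt 2)).
  replace (sqrt 2 * gauss_int (x / sqrt 2) / (sqrt 2 * sqrt PI))
    with (gauss_int (x / sqrt 2) * / sqrt PI) by (field; lra).
  assert (sqrt PI * / sqrt PI = 1) by (field; lra).
  assert (0 < / sqrt PI) by (apply Rinv_0_lt_compat; lra).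
  split; nra.
Qed.

Definition mills_gap (z : R) : R := npdf z / (- z) - Nphi z.

Lemma is_derive_mills_gap (z : R) : z < 0 -> is_derive mills_gap z (npdf z / (z * z)).
Proof. intros Hz. unfold mills_gap. derive_by_hints. field. lra. Qed.

Lemma mills_ratio (z : R) : z < 0 -> - z * Nphi z < npdf z.
Proof.
  intros Hz.
  assert (Hgap : 0 < mills_gap z).
  { apply (lim_m_infty_lt_increasing mills_gap (fun w => - Nphi w)).
    - intros x y [Hxy Hyz]. apply (is_derive_pos_lt mills_gap (fun w => npdf w / (w * w)));
        [exact Hxy | intros w Hw; apply is_derive_mills_gap; lra |].
      intros w Hw. apply Rdiv_lt_0_compat; [apply npdf_pos | nra].
    - intros x Hx. unfold mills_gap. pose proof (npdf_pos x).
      assert (0 < npdf x / - x) by (apply Rdiv_lt_0_compat; lra). lra.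
    - replace 0 with (- 0) by ring. apply (is_lim_opp Nphi m_infty 0), is_lim_Nphi_m_infty. }
  unfold mills_gap in Hgap. pose proof (npdf_pos z).
  apply Rmult_lt_reg_r with (/ - z); [apply Rinv_0_lt_compat; lra |].
  replace (- z * Nphi z * / - z) with (Nphi z) by (field; lra). unfold Rdiv in Hgap. lra.
Qed.

Lemma npdf_add_mul_Nphi_pos (m z : R) : z < m -> 0 < npdf z + m * Nphi z.
Proof.
  intros Hzm. pose proof (npdf_pos z). pose proof (Nphi_bounds z).
  destruct (Rle_or_lt 0 m) as [Hm | Hm]; [nra |].
  pose proof (mills_ratio z ltac:(lra)). nra.
Qed.

Lemma filterlim_Rplus {T : Type} {F : (T -> Prop) -> Prop} {FF : Filter F}
  (f g : T -> R) (lf lg : R) :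
  filterlim f F (locally lf) -> filterlim g F (locally lg) ->
  filterlim (fun x => f x + g x) F (locally (lf + lg)).
Proof.
  intros Hf Hg. apply (filterlim_comp_2 f g Rplus Hf Hg).
  apply (filterlim_plus (V := R_NormedModule)).
Qed.

Lemma filterlim_Rmult {T : Type} {F : (T -> Prop) -> Prop} {FF : Filter F}
  (f g : T -> R) (lf lg : R) :
  filterlim f F (locally lf) -> filterlim g F (locally lg) ->
  filterlim (fun x => f x * g x) F (locally (lf * lg)).
Proof.
  intros Hf Hg. apply (filterlim_comp_2 f g Rmult Hf Hg).
  apply (filterlim_mult (K := R_AbsRing)).
Qed.

Lemma filterlim_at_right_ex_derive (f : R -> R) (x : R) :
  ex_derive f x -> filterlim f (at_right x) (locally (f x)).
Proof.
  intros Hf. apply (filterlim_filter_le_1 (F := locally x)); [apply filter_le_within |].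
  apply (ex_derive_continuous (V := R_NormedModule)), Hf.
Qed.

Lemma filterlim_blowup_at_right_0 (x c s : R) : 0 < x -> 0 < s ->
  filterlim (fun u => (x + c * (u * u)) / (s * u)) (at_right 0) (Rbar_locally p_infty).
Proof.
  intros Hx Hs.
  apply (filterlim_ext (fun u => (x + c * (u * u)) * (/ s * / u))).
  { intros u. unfold Rdiv. rewrite Rinv_mult. reflexivity. }
  apply (filterlim_comp_2 (G := locally x) (H := Rbar_locally p_infty) _ _ Rmult).
  - assert (Hd : ex_derive (fun u => x + c * (u * u)) 0) by (auto_derive; easy).
    generalize (filterlim_at_right_ex_derive _ 0 Hd).
    now replace (x + c * (0 * 0)) with x by ring.
  - replace (Rbar_locally p_infty) with (Rbar_locally (Rbar_mult (/ s) p_infty)).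
    + apply (filterlim_comp _ _ _ Rinv (Rmult (/ s)) _ (Rbar_locally p_infty));
        [apply filterlim_Rinv_0_right | apply filterlim_Rbar_mult_l].
    + f_equal. apply is_Rbar_mult_unique, is_Rbar_mult_sym, is_Rbar_mult_p_infty_pos.
      apply Rinv_0_lt_compat, Hs.
  - apply (filterlim_Rbar_mult x p_infty p_infty), is_Rbar_mult_sym, is_Rbar_mult_p_infty_pos, Hx.
Qed.

Lemma filterlim_sqrt_sub_at_left (T : R) :
  filterlim (fun t => sqrt (T - t)) (at_left T) (at_right 0).
Proof.
  intros P [eps HP].
  assert (Heps : 0 < eps * eps) by (pose proof (cond_pos eps); nra).
  exists (mkposreal _ Heps). intros t Ht HtT.
  change (Rabs (t - T) < eps * eps) in Ht. rewrite Rabs_left in Ht by lra.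
  apply HP; [| apply sqrt_lt_R0; lra].
  change (Rabs (sqrt (T - t) - 0) < eps). rewrite Rminus_0_r, Rabs_pos_eq by apply sqrt_pos.
  rewrite <- (sqrt_square eps) by (pose proof (cond_pos eps); lra).
  apply sqrt_lt_1_alt. lra.
Qed.

Lemma ln_div_inv (x y : R) : 0 < x -> 0 < y -> ln (y / x) = - ln (x / y).
Proof. intros. rewrite !ln_div by assumption. ring. Qed.

Lemma ln_div_gt_0 (x y : R) : 0 < y < x -> 0 < ln (x / y).
Proof. intros Hyx. rewrite ln_div by lra. apply Rlt_0_minus, ln_increasing; lra. Qed.

(* [d1u], [d2u], [Pu], [Wu], [Bu] are d1, d2, (V / V_b)^kappa, W and B written in terms of
   u = sqrt (T - t), which keeps square roots out of every derivative. *)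
Section RootTime.

Variables r q a sigma b Rec : R.
Hypothesis Hsigma : 0 < sigma.
Hypothesis Hb : 0 < b.

Definition kappa : R := 1 - 2 * (r - q - a) / sigma ^ 2.
Definition barrier (u : R) : R := b * exp (- a * (u * u)).
Definition d1u (V u : R) : R := (ln (V / b) + (r - q - sigma ^ 2 / 2) * (u * u)) / (sigma * u).
Definition d2u (V u : R) : R :=
  (ln (b / V) + (r - q - 2 * a - sigma ^ 2 / 2) * (u * u)) / (sigma * u).
Definition Pu (V u : R) : R := exp (kappa * ln (V / barrier u)).
Definition Wu (V u : R) : R := Nphi (d1u V u) - Pu V u * Nphi (d2u V u).
Definition Bu (V u : R) : R := Rec * exp (- r * (u * u)) + Wu V u * (1 - Rec) * exp (- r * (u * u)).

Lemma barrier_pos (u : R) : 0 < barrier u.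
Proof. apply Rmult_lt_0_compat; [exact Hb | apply exp_pos]. Qed.

Lemma ln_div_barrier (V u : R) : 0 < V -> ln (V / barrier u) = ln (V / b) + a * (u * u).
Proof.
  intros HV. unfold barrier. pose proof (exp_pos (- a * (u * u))).
  rewrite ln_div, ln_mult, ln_exp, ln_div by (try apply Rmult_lt_0_compat; assumption). ring.
Qed.

Lemma d1u_plus_d2u (V u : R) : 0 < V -> 0 < u -> d1u V u + d2u V u = - kappa * sigma * u.
Proof. intros. unfold d1u, d2u, kappa. rewrite (ln_div_inv V b) by assumption. field. lra. Qed.

Lemma npdf_d1u (V u : R) : 0 < V -> 0 < u -> npdf (d1u V u) = Pu V u * npdf (d2u V u).
Proof.
  intros HV Hu. unfold Pu, d1u, d2u, kappa, npdf.
  rewrite ln_div_barrier, (ln_div_inv V b) by assumption. set (L := ln (V / b)).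
  unfold Rdiv. rewrite <- (Rmult_assoc (exp _) (exp _)), <- exp_plus. do 2 f_equal. field. lra.
Qed.

Lemma is_derive_d1u_V (V u : R) : 0 < V -> 0 < u ->
  is_derive (fun x => d1u x u) V (/ (V * sigma * u)).
Proof. intros. unfold d1u. derive_by_hints. field. lra. Qed.

Lemma is_derive_d2u_V (V u : R) : 0 < V -> 0 < u ->
  is_derive (fun x => d2u x u) V (- / (V * sigma * u)).
Proof. intros. unfold d2u. derive_by_hints. field. lra. Qed.

Lemma is_derive_d1u_u (V u : R) : 0 < V -> 0 < u ->
  is_derive (fun y => d1u V y) u (2 * (r - q - sigma ^ 2 / 2) / sigma - d1u V u / u).
Proof. intros. unfold d1u. derive_by_hints. field. lra. Qed.

Lemma is_derive_d2u_u (V u : R) : 0 < V -> 0 < u ->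
  is_derive (fun y => d2u V y) u (2 * (r - q - 2 * a - sigma ^ 2 / 2) / sigma - d2u V u / u).
Proof. intros. unfold d2u. derive_by_hints. field. lra. Qed.

Lemma is_derive_Pu_V (V u : R) : 0 < V -> is_derive (fun x => Pu x u) V (kappa * Pu V u / V).
Proof.
  intros. pose proof (barrier_pos u). unfold Pu. derive_by_hints. unfold Rdiv. field. lra.
Qed.

Lemma is_derive_Pu_u (V u : R) : 0 < V ->
  is_derive (fun y => Pu V y) u (2 * a * kappa * u * Pu V u).
Proof.
  intros. pose proof (barrier_pos u). unfold Pu, barrier. derive_by_hints. unfold Rdiv. field_pos.
Qed.

#[local] Hint Resolve is_derive_d1u_V is_derive_d2u_V is_derive_d1u_u is_derive_d2u_u
  is_derive_Pu_V is_derive_Pu_u : derive.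

Definition Bu_V (V u : R) : R :=
  (1 - Rec) * exp (- r * (u * u)) * Pu V u / V *
  (2 * npdf (d2u V u) / (sigma * u) - kappa * Nphi (d2u V u)).

Definition Bu_VV (V u : R) : R :=
  (1 - Rec) * exp (- r * (u * u)) * Pu V u / (V * V) *
  ((kappa - 1) * (2 * npdf (d2u V u) / (sigma * u) - kappa * Nphi (d2u V u))
   + (2 * d2u V u / (sigma * u) + kappa) * npdf (d2u V u) / (sigma * u)).

Definition Bu_u (V u : R) : R :=
  - 2 * r * u * Bu V u
  + (1 - Rec) * exp (- r * (u * u)) * Pu V u *
    (npdf (d2u V u) * (4 * a / sigma - (d1u V u - d2u V u) / u)
     - 2 * a * kappa * u * Nphi (d2u V u)).

Lemma is_derive_Bu_V (V u : R) : 0 < V -> 0 < u -> is_derive (fun x => Bu x u) V (Bu_V V u).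
Proof.
  intros. unfold Bu, Wu, Bu_V. derive_by_hints. rewrite npdf_d1u by assumption. field_pos.
Qed.

Lemma is_derive_Bu_VV (V u : R) : 0 < V -> 0 < u -> is_derive (fun x => Bu_V x u) V (Bu_VV V u).
Proof. intros. unfold Bu_V, Bu_VV. derive_by_hints. field_pos. Qed.

Lemma is_derive_Bu_u (V u : R) : 0 < V -> 0 < u -> is_derive (fun y => Bu V y) u (Bu_u V u).
Proof.
  intros. unfold Bu_u, Bu, Wu. derive_by_hints. rewrite npdf_d1u by assumption. field_pos.
Qed.

Lemma Bu_pde (V u : R) : 0 < V -> 0 < u ->
  - Bu_u V u / (2 * u) + / 2 * sigma ^ 2 * V ^ 2 * Bu_VV V u
  + (r - q) * V * Bu_V V u - r * Bu V u = 0.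
Proof.
  intros HV Hu. unfold Bu_u, Bu_VV, Bu_V.
  replace (d1u V u) with (- kappa * sigma * u - d2u V u)
    by (rewrite <- (d1u_plus_d2u V u HV Hu); ring).
  unfold kappa. field_pos.
Qed.

Lemma d2u_lt_drift (V u : R) : 0 < u -> barrier u < V ->
  d2u V u < (r - q - a - sigma ^ 2 / 2) * u / sigma.
Proof.
  intros Hu HV. pose proof (barrier_pos u).
  pose proof (ln_div_gt_0 V (barrier u) (conj (barrier_pos u) HV)).
  assert (Hd2 : d2u V u =
    (r - q - a - sigma ^ 2 / 2) * u / sigma - ln (V / barrier u) / (sigma * u)).
  { unfold d2u. rewrite ln_div_barrier, (ln_div_inv V b) by lra. field. lra. }
  rewrite Hd2. assert (0 < ln (V / barrier u) / (sigma * u)) by pos_side. lra.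
Qed.

Lemma Bu_V_pos (V u : R) : 0 < u -> Rec < 1 -> barrier u < V -> 0 < Bu_V V u.
Proof.
  intros Hu HR HV. pose proof (barrier_pos u).
  pose proof (npdf_add_mul_Nphi_pos _ _ (d2u_lt_drift V u Hu HV)).
  unfold Bu_V.
  replace (2 * npdf (d2u V u) / (sigma * u) - kappa * Nphi (d2u V u)) with
    (2 / (sigma * u) * (npdf (d2u V u) + (r - q - a - sigma ^ 2 / 2) * u / sigma * Nphi (d2u V u)))
    by (unfold kappa; field; lra).
  unfold Pu. pos_side.
Qed.

Lemma Wu_barrier (u : R) : 0 < u -> Wu (barrier u) u = 0.
Proof.
  intros Hu. pose proof (barrier_pos u).
  unfold Wu, Pu. rewrite Rdiv_diag, ln_1, Rmult_0_r, exp_0, Rmult_1_l by lra.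
  enough (d1u (barrier u) u = d2u (barrier u) u) as -> by ring.
  unfold d1u, d2u. rewrite (ln_div_inv b (barrier u)), ln_div_barrier, Rdiv_diag, ln_1 by lra.
  field. lra.
Qed.

Lemma Bu_bounds (V u : R) : 0 < u -> Rec < 1 -> barrier u < V ->
  Rec * exp (- r * (u * u)) < Bu V u < exp (- r * (u * u)).
Proof.
  intros Hu HR HV. pose proof (barrier_pos u). split.
  - replace (Rec * exp (- r * (u * u))) with (Bu (barrier u) u)
      by (unfold Bu; rewrite Wu_barrier by assumption; ring).
    apply (is_derive_pos_lt (fun x => Bu x u) (fun x => Bu_V x u)); [exact HV | |].
    + intros x Hx. apply is_derive_Bu_V; lra.
    + intros x Hx. apply Bu_V_pos; lra.
  - assert (Wu V u < 1).
    { unfold Wu. pose proof (Nphi_bounds (d1u V u)). destruct (Nphi_bounds (d2u V u)).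
      assert (0 < Pu V u * Nphi (d2u V u)) by (unfold Pu; pos_side). lra. }
    assert (0 < (1 - Wu V u) * (1 - Rec)) by (apply Rmult_lt_0_compat; lra).
    unfold Bu. pose proof (exp_pos (- r * (u * u))). nra.
Qed.

Lemma filterlim_Nphi_d1u_at_right_0 (V : R) : b < V ->
  filterlim (fun u => Nphi (d1u V u)) (at_right 0) (locally 1).
Proof.
  intros HV. apply (filterlim_comp _ _ _ (d1u V) Nphi _ (Rbar_locally p_infty));
    [apply filterlim_blowup_at_right_0, Hsigma; apply ln_div_gt_0; lra | apply is_lim_Nphi_p_infty].
Qed.

Lemma filterlim_Nphi_d2u_at_right_0 (V : R) : b < V ->
  filterlim (fun u => Nphi (d2u V u)) (at_right 0) (locally 0).
Proof.
  intros HV. set (c := - (r - q - 2 * a - sigma ^ 2 / 2)).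
  apply (filterlim_ext (fun u => Nphi (- ((ln (V / b) + c * (u * u)) / (sigma * u))))).
  { intros u. unfold d2u. rewrite (ln_div_inv V b) by lra. unfold c, Rdiv. f_equal. ring. }
  apply (filterlim_comp _ _ _ _ (fun y => Nphi (- y)) _ (Rbar_locally p_infty));
    [apply filterlim_blowup_at_right_0, Hsigma; apply ln_div_gt_0; lra |].
  apply (is_lim_comp Nphi Ropp p_infty 0 m_infty); [apply is_lim_Nphi_m_infty | | exists 0; easy].
  change m_infty with (Rbar_opp p_infty). apply is_lim_opp, is_lim_id.
Qed.

Lemma filterlim_Bu_at_right_0 (V : R) : b < V -> filterlim (Bu V) (at_right 0) (locally 1).
Proof.
  intros HV.
  assert (HE : filterlim (fun u => exp (- r * (u * u))) (at_right 0) (locally 1)).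
  { replace 1 with (exp (- r * (0 * 0))) by (rewrite Rmult_0_r, Rmult_0_r, exp_0; reflexivity).
    apply (filterlim_at_right_ex_derive (fun u => exp (- r * (u * u)))). auto_derive. easy. }
  assert (HW : filterlim (Wu V) (at_right 0) (locally 1)).
  { replace 1 with (1 + -1 * (Pu V 0 * 0)) by ring.
    apply (filterlim_ext (fun u => Nphi (d1u V u) + -1 * (Pu V u * Nphi (d2u V u))));
      [intros u; unfold Wu; ring |].
    apply filterlim_Rplus; [apply filterlim_Nphi_d1u_at_right_0, HV |].
    apply filterlim_Rmult; [apply filterlim_const |].
    apply filterlim_Rmult; [| apply filterlim_Nphi_d2u_at_right_0, HV].
    apply filterlim_at_right_ex_derive. eexists. apply is_derive_Pu_u. lra. }
  replace 1 with (Rec * 1 + 1 * (1 - Rec) * 1) by ring.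
  apply filterlim_Rplus; [apply filterlim_Rmult; [apply filterlim_const | exact HE] |].
  apply filterlim_Rmult; [apply filterlim_Rmult; [exact HW | apply filterlim_const] | exact HE].
Qed.

Local Notation B T := (Bond r q a sigma b Rec T).

Lemma Bond_Bu (T V t : R) : t <= T -> B T V t = Bu V (sqrt (T - t)).
Proof.
  intros Ht. unfold Bond, Wsurv, Defs.d1, Defs.d2, Bu, Wu, d1u, d2u, Pu, barrier, Rpower, kappa.
  set (u := sqrt (T - t)). replace (T - t) with (u * u) by (apply sqrt_sqrt; lra).
  reflexivity.
Qed.

Lemma Vb_barrier (T t : R) : t <= T -> Vb a b T t = barrier (sqrt (T - t)).
Proof. intros Ht. unfold Vb, barrier. rewrite sqrt_sqrt by lra. reflexivity. Qed.

Lemma is_derive_Bond_V (T V t : R) : t < T -> 0 < V ->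
  is_derive (fun x => B T x t) V (Bu_V V (sqrt (T - t))).
Proof.
  intros Ht HV. apply (is_derive_ext (fun x => Bu x (sqrt (T - t)))).
  - intros x. symmetry. apply Bond_Bu. lra.
  - apply is_derive_Bu_V; [exact HV | apply sqrt_lt_R0; lra].
Qed.

Lemma is_derive_Bond_VV (T V t : R) : t < T -> 0 < V ->
  is_derive (Derive (fun x => B T x t)) V (Bu_VV V (sqrt (T - t))).
Proof.
  intros Ht HV. apply (is_derive_ext_loc (fun x => Bu_V x (sqrt (T - t)))).
  - apply (locally_interval _ V 0 p_infty); [exact HV | easy |].
    intros x Hx _. symmetry. apply is_derive_unique, is_derive_Bond_V; assumption.
  - apply is_derive_Bu_VV; [exact HV | apply sqrt_lt_R0; lra].
Qed.

Lemma is_derive_Bond_t (T V t : R) : t < T -> 0 < V ->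
  is_derive (fun s => B T V s) t (- Bu_u V (sqrt (T - t)) / (2 * sqrt (T - t))).
Proof.
  intros Ht HV. pose proof (sqrt_lt_R0 (T - t) ltac:(lra)) as Hu.
  apply (is_derive_ext_loc (fun s => Bu V (sqrt (T - s)))).
  { apply (locally_interval _ t m_infty T); [easy | exact Ht |].
    intros s _ Hs. symmetry. apply Bond_Bu. simpl in Hs. lra. }
  eapply is_derive_eq.
  - apply (is_derive_comp (Bu V) (fun s => sqrt (T - s))); [apply is_derive_Bu_u; assumption |].
    auto_derive; [lra | reflexivity].
  - unfold scal; simpl; unfold mult, Rminus in *; simpl. field. lra.
Qed.

Lemma Bond_pde (T V t : R) : 0 < t < T -> Vb a b T t < V ->
  ex_derive (fun s => B T V s) t /\
  ex_derive (fun x => B T x t) V /\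
  ex_derive_n (fun x => B T x t) 2 V /\
  Derive (fun s => B T V s) t
  + / 2 * sigma ^ 2 * V ^ 2 * Derive_n (fun x => B T x t) 2 V
  + (r - q) * V * Derive (fun x => B T x t) V
  - r * B T V t = 0.
Proof.
  intros [_ Ht] HV. rewrite Vb_barrier in HV by lra.
  pose proof (barrier_pos (sqrt (T - t))). assert (HV0 : 0 < V) by lra.
  pose proof (is_derive_Bond_t T V t Ht HV0) as Dt.
  pose proof (is_derive_Bond_V T V t Ht HV0) as DV.
  pose proof (is_derive_Bond_VV T V t Ht HV0) as DVV.
  split; [eexists; exact Dt |]. split; [eexists; exact DV |]. split; [eexists; exact DVV |].
  change (Derive_n (fun x => B T x t) 2 V) with (Derive (Derive (fun x => B T x t)) V).
  rewrite_Derive. rewrite Bond_Bu by lra. apply Bu_pde; [exact HV0 | apply sqrt_lt_R0; lra].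
Qed.

Lemma Bond_barrier (T t : R) : t < T -> B T (Vb a b T t) t = exp (- r * (T - t)) * Rec.
Proof.
  intros Ht. rewrite Vb_barrier, Bond_Bu by lra. unfold Bu.
  rewrite Wu_barrier by (apply sqrt_lt_R0; lra). rewrite sqrt_sqrt by lra. ring.
Qed.

Lemma filterlim_Bond_terminal (T V : R) : b < V ->
  filterlim (fun t => B T V t) (at_left T) (locally 1).
Proof.
  intros HV. apply (filterlim_ext_loc (fun t => Bu V (sqrt (T - t)))).
  - exists (mkposreal 1 Rlt_0_1). intros t _ Ht. symmetry. apply Bond_Bu. lra.
  - apply (filterlim_comp _ _ _ _ (Bu V) _ (at_right 0));
      [apply filterlim_sqrt_sub_at_left | apply filterlim_Bu_at_right_0, HV].
Qed.

Lemma Bond_increasing_bounded (T V t : R) : Rec < 1 -> t < T -> Vb a b T t < V ->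
  ex_derive (fun x => B T x t) V /\ 0 < Derive (fun x => B T x t) V /\
  Rec * exp (- r * (T - t)) < B T V t < exp (- r * (T - t)).
Proof.
  intros HR Ht HV. rewrite Vb_barrier in HV by lra.
  pose proof (barrier_pos (sqrt (T - t))). pose proof (sqrt_lt_R0 (T - t) ltac:(lra)).
  pose proof (is_derive_Bond_V T V t Ht ltac:(lra)) as DV.
  split; [eexists; exact DV |]. split.
  - rewrite_Derive. apply Bu_V_pos; assumption.
  - rewrite Bond_Bu by lra. pose proof (Bu_bounds V (sqrt (T - t))) as Hbounds.
    rewrite sqrt_sqrt in Hbounds by lra. apply Hbounds; assumption.
Qed.

End RootTime.

Theorem theorem3 (r q a sigma b Rec T : R)
  (Hsigma : 0 < sigma) (Hb : 0 < b) (HR0 : 0 <= Rec) (HR1 : Rec < 1) (HT : 0 < T) :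
  let B := Bond r q a sigma b Rec T in
  (* the PDE on V_b(t) < V, 0 < t < T *)
  (forall V t, 0 < t < T -> Vb a b T t < V ->
     ex_derive (fun s => B V s) t /\
     ex_derive (fun x => B x t) V /\
     ex_derive_n (fun x => B x t) 2 V /\
     Derive (fun s => B V s) t
     + / 2 * sigma ^ 2 * V ^ 2 * Derive_n (fun x => B x t) 2 V
     + (r - q) * V * Derive (fun x => B x t) V
     - r * B V t = 0) /\
  (* boundary condition on the default barrier *)
  (forall t, 0 < t < T -> B (Vb a b T t) t = exp (- r * (T - t)) * Rec) /\
  (* terminal condition B(V,T) = 1 for V > b, attained as t -> T^- *)
  (forall V, b < V -> filterlim (fun t => B V t) (at_left T) (locally 1)) /\
  (* monotonicity and bounds *)
  (forall V t, 0 <= t < T -> Vb a b T t < V ->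
     ex_derive (fun x => B x t) V /\ 0 < Derive (fun x => B x t) V /\
     Rec * exp (- r * (T - t)) < B V t < exp (- r * (T - t))).
Proof.
  cbv zeta. split; [| split; [| split]].
  - intros V t Ht HV. exact (Bond_pde r q a sigma b Rec Hsigma Hb T V t Ht HV).
  - intros t Ht. apply (Bond_barrier r q a sigma b Rec Hsigma Hb). lra.
  - intros V HV. exact (filterlim_Bond_terminal r q a sigma b Rec Hsigma Hb T V HV).
  - intros V t Ht HV.
    apply (Bond_increasing_bounded r q a sigma b Rec Hsigma Hb); [exact HR1 | lra | exact HV].
Qed.
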